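(* Consider the $T$-round online first-price auction problem described in the context. For any integer $L_T\in\{1,\dots,T\}$ with $L_T\le\frac T3$, \[ \inf_{\pi\in\Pi}\ \sup_{(v_t,m_t)_{t=1}^T\in\mathcal{L}}\mathbb{E}[\mathrm{DR}_T(\pi)]\ge\frac{L_T}{8}. \]
   Context: Online first-price auction over $T$ rounds: at each round $t$ the learner observes a private value $v_t\in[0,1]$, submits a bid $b_t\in[0,1]$, then observes $m_t\in[0,1]$, the highest bid of the other bidders, and receives reward $r(b_t;v_t,m_t)$ with $r(b;v,m)\coloneqq(v-b)\mathbbm{1}(b\ge m)$. An admissible policy $\pi\in\Pi$ is a sequence of measurable functions $\pi_t$ with $b_t=\pi_t((v_s,m_s)_{s=1}^{t-1},v_t,U)$, where $U$ is the learner's internal random variable. The expected dynamic regret is $\mathbb{E}[\mathrm{DR}_T(\pi)]\coloneqq\sum_{t=1}^T\max\{v_t-m_t,0\}-\sum_{t=1}^T\mathbb{E}[r(b_t;v_t,m_t)]$. $\mathcal{L}\coloneqq\{(v_t,m_t)_{t=1}^T\in[0,1]^{2T}:\sum_{t=2}^T\mathbbm{1}(m_t\ne m_{t-1})\le L_T\}$. *)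

From HB Require Import structures.
From mathcomp Require Import all_boot all_order all_algebra.
From mathcomp Require Import all_classical all_reals all_analysis.
Set Implicit Arguments. Unset Strict Implicit. Unset Printing Implicit Defensive.
Import Order.TTheory GRing.Theory Num.Theory.
Local Open Scope ring_scope.
Local Open Scope classical_set_scope.

(* Rounds are indexed by t = 0, ..., T-1 (paper: 1, ..., T).
   A value/competing-bid sequence is a pair of functions v m : nat -> R
   (only the values at t < T matter). *)

Definition reward (R : realType) (b v m : R) : R :=
  (v - b) * (if m <= b then 1 else 0).

(* A policy: the bid at round t is  pi t v m (v t) U,  where pi t may depend
   on (v, m) only through the history (v s, m s)_{s < t} (causality), and U
   is the learner's internal random variable, living on a probability space
   (Omega, P). *)
Definition admissible (R : realType) d (Omega : measurableType d)
    (pi : nat -> (nat -> R) -> (nat -> R) -> R -> Omega -> R) : Prop :=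
  [/\ (forall t v m x w, 0 <= pi t v m x w <= 1),
      (forall t v v' m m', (forall s, (s < t)%N -> v s = v' s /\ m s = m' s) ->
          pi t v m = pi t v' m') &
      (forall t v m x, measurable_fun setT (pi t v m x))].

Definition in_class (R : realType) (T LT : nat) (v m : nat -> R) : Prop :=
  (forall t, (t < T)%N -> 0 <= v t <= 1 /\ 0 <= m t <= 1) /\
  (\sum_(1 <= t < T) (m t != m t.-1 : nat) <= LT)%N.

Definition exp_dyn_regret (R : realType) d (Omega : measurableType d)
    (P : probability Omega R)
    (pi : nat -> (nat -> R) -> (nat -> R) -> R -> Omega -> R)
    (T : nat) (v m : nat -> R) : \bar R :=
  (\sum_(t < T) (Num.max (v t - m t) 0)%:E
   - \sum_(t < T) \int[P]_w (reward (pi t v m (v t) w) (v t) (m t))%:E)%E.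

(* The adversary keeps every value at 1 and, in each of the first L_T rounds,
   posts a competing bid m_t in {0, 1/2} chosen from the law of the learner's
   bid b_t, which by causality depends only on the past prices and on U.
   Pointwise r(b;1,0) + r(b;1,1/2) <= 1, so either E r(b_t;1,0) <= 3/4 against
   a best reward of 1, or E r(b_t;1,1/2) <= 1/4 against a best reward of 1/2:
   each of these rounds costs expected regret at least 1/4.  Freezing m_t
   afterwards keeps the number of switches at most L_T, hence a regret of at
   least L_T/4. *)

From HB Require Import structures.
From mathcomp Require Import all_boot all_order all_algebra.
From mathcomp Require Import all_classical all_reals all_analysis.
From mathcomp Require Import measurable_realfun lra.
Set Implicit Arguments. Unset Strict Implicit. Unset Printing Implicit Defensive.
Import Order.TTheory GRing.Theory Num.Theory.
Local Open Scope ring_scope.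
Local Open Scope classical_set_scope.

Lemma switches_le_const_from (A : eqType) (T k : nat) (m : nat -> A) :
  (forall t, (k <= t)%N -> m t = m k) ->
  (\sum_(1 <= t < T) (m t != m t.-1 : nat) <= k)%N.
Proof.
move=> m_const.
have no_switch t : (k < t)%N -> m t = m t.-1.
  by move=> kt; rewrite (m_const t (ltnW kt)) (m_const t.-1) // -ltnS (ltn_predK kt).
set N := maxn T k.+1.
apply: (@leq_trans (\sum_(1 <= t < N) (m t != m t.-1 : nat))).
  rewrite (big_nat_widen _ _ _ _ _ (leq_maxl T k.+1)) big_mkcond /=.
  by apply: leq_sum => t _; case: ifP.
rewrite (@big_cat_nat _ _ _ k.+1) ?leq_maxr //=.
have -> : (\sum_(k.+1 <= t < N) (m t != m t.-1 : nat) = 0)%N.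
  by rewrite big_nat_cond big1 // => t /andP[/andP[kt _] _]; rewrite no_switch // eqxx.
rewrite addn0.
apply: (@leq_trans (\sum_(1 <= t < k.+1) 1)); first by apply: leq_sum => t _; exact: leq_b1.
by rewrite sum_nat_const_nat subn1 muln1.
Qed.

Section Reward.
Variable R : realType.

Lemma reward_ge0 (b v m : R) : b <= v -> 0 <= reward b v m.
Proof. by move=> bv; rewrite /reward; case: ifP => _; rewrite ?mulr0 // mulr1 subr_ge0. Qed.

Lemma reward_le_max (b v m : R) : reward b v m <= Num.max (v - m) 0.
Proof.
rewrite /reward le_max; case: ifP => mb; last by rewrite mulr0 lexx orbT.
by rewrite mulr1 lerB.
Qed.

Lemma reward_0_half_le1 (b : R) : reward b 1 0 + reward b 1 (1 / 2) <= 1.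
Proof. by rewrite /reward; case: ifP; case: ifP => /=; lra. Qed.

End Reward.

Section RandomBid.
Variables (R : realType) (d : measure_display) (Omega : measurableType d).
Variables (P : probability Omega R) (b : Omega -> R).
Hypothesis mb : measurable_fun setT b.

Lemma measurable_reward (v m : R) : measurable_fun setT (fun w => reward (b w) v m).
Proof.
apply: measurable_funM; first by apply: measurable_funB => //; exact: measurable_cst.
apply: measurable_fun_ifT => //; try exact: measurable_cst.
by apply: measurable_fun_ler => //; exact: measurable_cst.
Qed.

Lemma integral_cst_probability (c : R) : (\int[P]_w c%:E = c%:E)%E.
Proof. by rewrite integral_cst // [X in (_ * X)%E](probability_setT P) mule1. Qed.

Lemma integral_reward_bounds (v m : R) : (forall w, b w <= v) ->
  (0 <= \int[P]_w (reward (b w) v m)%:E <= (Num.max (v - m) 0)%:E)%E.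
Proof.
move=> bv; have rew_ge0 w : (0 <= (reward (b w) v m)%:E)%E by rewrite lee_fin reward_ge0.
rewrite integral_ge0 //= -[X in (_ <= X)%E]integral_cst_probability.
apply: ge0_le_integral => //; first by apply/measurable_EFinP; exact: measurable_reward.
by move=> w _; rewrite lee_fin reward_le_max.
Qed.

Lemma integral_reward_fin_num (v m : R) : (forall w, b w <= v) ->
  (\int[P]_w (reward (b w) v m)%:E)%E \is a fin_num.
Proof.
move=> bv; have /andP[J_ge0 J_le] := integral_reward_bounds m bv.
by rewrite ge0_fin_numE // (le_lt_trans J_le) ?ltry.
Qed.

Lemma integral_reward_0_half_le1 : (forall w, b w <= 1) ->
  (\int[P]_w (reward (b w) 1 0)%:E + \int[P]_w (reward (b w) 1 (1 / 2))%:E <= 1%:E)%E.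
Proof.
move=> b_le1; have rew_ge0 c w : (0 <= (reward (b w) 1 c)%:E)%E by rewrite lee_fin reward_ge0.
have mrew c : measurable_fun setT (fun w => (reward (b w) 1 c)%:E).
  by apply/measurable_EFinP; exact: measurable_reward.
rewrite -ge0_integralD // -[X in (_ <= X)%E]integral_cst_probability.
apply: ge0_le_integral => //; first by move=> w _; rewrite adde_ge0.
  exact: emeasurable_funD.
by move=> w _; rewrite -EFinD lee_fin reward_0_half_le1.
Qed.

Lemma exists_hard_price : (forall w, b w <= 1) ->
  exists2 c : R, c = 0 \/ c = 1 / 2 &
    1 / 4 <= Num.max (1 - c) 0 - fine (\int[P]_w (reward (b w) 1 c)%:E).
Proof.
move=> b_le1; have := integral_reward_0_half_le1 b_le1.
rewrite -(fineK (integral_reward_fin_num 0 b_le1)).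
rewrite -(fineK (integral_reward_fin_num (1 / 2) b_le1)) -EFinD lee_fin.
set J0 := fine _; set Jh := fine _ => sum_le1.
have [J0_le|J0_gt] := lerP J0 (3 / 4).
  by exists 0; [left | rewrite subr0 max_l // -/J0; lra].
by exists (1 / 2); [right | rewrite -/Jh max_l; lra].
Qed.

End RandomBid.

Section Adversary.
Variables (R : realType) (d : measure_display) (Omega : measurableType d).
Variables (P : probability Omega R)
  (pi : nat -> (nat -> R) -> (nat -> R) -> R -> Omega -> R).
Hypothesis pi_adm : admissible pi.

(* [fine] sends an infinite expected reward to 0; [exp_dyn_regretE] rules this
   out when the bids stay below the values. *)
Definition round_regret (v m : nat -> R) (t : nat) : R :=
  Num.max (v t - m t) 0 - fine (\int[P]_w (reward (pi t v m (v t) w) (v t) (m t))%:E).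

Lemma measurable_bid t v m x : measurable_fun setT (pi t v m x).
Proof. by case: pi_adm. Qed.

Lemma bid_le1 t v m x w : pi t v m x w <= 1.
Proof. by case: pi_adm => bid01 _ _; case/andP: (bid01 t v m x w). Qed.

Lemma bid_causal t v m m' : (forall s, (s < t)%N -> m s = m' s) -> pi t v m = pi t v m'.
Proof. by case: pi_adm => _ causal _ eq_m; apply: causal => s /eq_m. Qed.

Lemma round_regret_ge0 v m t : (forall w, pi t v m (v t) w <= v t) ->
  0 <= round_regret v m t.
Proof.
move=> bid_le; have fin := integral_reward_fin_num P (measurable_bid t v m (v t)) (m t) bid_le.
have /andP[_] := integral_reward_bounds P (measurable_bid t v m (v t)) (m t) bid_le.
by rewrite -(fineK fin) lee_fin subr_ge0.
Qed.

Lemma exp_dyn_regretE T v m : (forall t w, pi t v m (v t) w <= v t) ->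
  exp_dyn_regret P pi T v m = (\sum_(t < T) round_regret v m t)%:E.
Proof.
move=> bid_le; rewrite /exp_dyn_regret /round_regret sumrB EFinB -!sumEFin.
congr (_ - _)%E; apply: eq_bigr => t _; rewrite fineK //.
exact (integral_reward_fin_num P (measurable_bid t v m (v t)) (m t) (bid_le t)).
Qed.

Lemma round_regret_causal v m m' t : (forall s, (s <= t)%N -> m s = m' s) ->
  round_regret v m t = round_regret v m' t.
Proof.
move=> eq_m; rewrite /round_regret (@bid_causal t v m m') ?eq_m // => s /ltnW.
exact: eq_m.
Qed.

Lemma exists_adversarial_prices k : exists m : nat -> R,
  [/\ forall t, m t = 0 \/ m t = 1 / 2, forall t, (k <= t)%N -> m t = m k &
      k%:R / 4 <= \sum_(t < k) round_regret (fun=> 1) m t].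
Proof.
elim: k => [|k [m [m_vals m_const m_regret]]].
  by exists (fun=> 0); split=> [t||]; [left | | rewrite big_ord0 mul0r].
have [c c_vals c_regret] :=
  exists_hard_price P (measurable_bid k (fun=> 1) m 1) (bid_le1 k (fun=> 1) m 1).
pose m' t := if (t < k)%N then m t else c.
have m'_prefix s : (s < k)%N -> m' s = m s by rewrite /m' => ->.
exists m'; split.
- by move=> t; rewrite /m'; case: ifP.
- by move=> t kt; rewrite /m' !ltnNge (ltnW kt) leqnSn.
rewrite big_ord_recr /=.
have -> : \sum_(t < k) round_regret (fun=> 1) m' t = \sum_(t < k) round_regret (fun=> 1) m t.
  apply: eq_bigr => t _; apply: round_regret_causal => s st.
  exact/m'_prefix/(leq_ltn_trans st).
have -> : round_regret (fun=> 1) m' k =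
    Num.max (1 - c) 0 - fine (\int[P]_w (reward (pi k (fun=> 1) m 1 w) 1 c)%:E).
  by rewrite /round_regret (@bid_causal k _ m' m) // /m' ltnn.
by rewrite -addn1 natrD mulrDl; lra.
Qed.

End Adversary.

Theorem theorem5 (R : realType) (d : measure_display) (Omega : measurableType d)
    (P : probability Omega R) (T LT : nat) :
  (1 <= LT)%N -> (LT <= T)%N -> (3 * LT <= T)%N ->
  forall pi : nat -> (nat -> R) -> (nat -> R) -> R -> Omega -> R,
    admissible pi ->
    ((LT%:R / 8 : R)%:E <=
      ereal_sup [set r : \bar R | exists v m : nat -> R,
                   in_class T LT v m /\ r = exp_dyn_regret P pi T v m])%E.
Proof.
move=> _ LT_le_T _ pi pi_adm.
have [m [m_vals m_const regret_LT]] := exists_adversarial_prices P pi_adm LT.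
have bid_le t w : pi t (fun=> 1) m 1 w <= 1 := bid_le1 pi_adm t (fun=> 1) m 1 w.
apply: le_trans (ereal_sup_ubound _); last first.
  exists (fun=> 1), m; split=> //; split; last exact: switches_le_const_from.
  by move=> t _; split; [lra | case: (m_vals t) => ->; lra].
rewrite exp_dyn_regretE // lee_fin.
have regret_LT_le_T : \sum_(t < LT) round_regret P pi (fun=> 1) m t <=
                      \sum_(t < T) round_regret P pi (fun=> 1) m t.
  rewrite (big_ord_widen T _ LT_le_T) big_mkcond /=.
  by apply: ler_sum => t _; case: ifP => // _; exact: round_regret_ge0.
have : 0 <= LT%:R :> R by [].
lra.
Qed.
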